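(* Let $\Gamma$ be as below, let $k>v_1$ be an integer, and let $\varphi=(x(t),y(t))$ be the $k$-jet of an element of $\Sigma_\Gamma$ (so $x(t)=t^{v_0}$ and $y(t)$ is a polynomial of degree $\le k$ starting with $t^{v_1}$). Define $$T_1=\{\,j^k\big(x'(t)\epsilon+\varphi^*(g),\ y'(t)\epsilon+\varphi^*(h)\big):\ \epsilon\in\mathcal M_1^2,\ g,h\in\mathcal M_2^2\,\},$$ $$\widetilde T=\{\,j^k\big(x'(t)\epsilon+\varphi^*(g),\ y'(t)\epsilon+\varphi^*(h)\big):\ \epsilon\in\mathcal M_1^2,\ g\in\langle X^2,Y\rangle,\ h\in\mathcal M_2^2\,\}$$ (these are the tangent spaces at $\varphi$ to the orbits of $\varphi$ under the groups of $k$-jets of $\mathcal A_1$, resp. $\widetilde{\mathcal A}$). Then for $b\in\mathbb C$, $b\ne0$: $(0,bt^k)\in T_1$ if and only if there exist $g,h\in\mathcal M_2^2$ with $\mathrm{ord}_t\big(\varphi^*(h)x'(t)-\varphi^*(g)y'(t)\big)=k+v_0-1$; and $(0,bt^k)\in\widetilde T$ if and only if there exist $g\in\langle X^2,Y\rangle$, $h\in\mathcal M_2^2$ with $\mathrm{ord}_t\big(\varphi^*(h)x'(t)-\varphi^*(g)y'(t)\big)=k+v_0-1$.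
   Context: $\mathcal O_1=\mathbb C\{t\}$, $\mathcal O_2=\mathbb C\{X,Y\}$, with maximal ideals $\mathcal M_1,\mathcal M_2$; $\varphi^*(h)=h(x(t),y(t))$; $j^k$ denotes the $k$-jet (truncation modulo $t^{k+1}$, componentwise); $\langle X^2,Y\rangle$ is the ideal of $\mathcal O_2$ generated by $X^2$ and $Y$. $\Gamma$ is the semigroup of values of a plane branch with minimal generators $v_0<v_1<\cdots<v_g$ and conductor $c$; $\Sigma_\Gamma$ is the set of Puiseux parametrizations $(t^{v_0},t^{v_1}+\sum_{v_1<i<c}a_it^i)$ (primitive, $v_0\nmid v_1$) whose semigroup of values $\{\mathrm{ord}_t h(x(t),y(t)): h\in\mathcal O_2,\ h(x,y)\ne0\}$ equals $\Gamma$. *)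

From HB Require Import structures.
From mathcomp Require Import all_boot all_order all_algebra.
Set Implicit Arguments. Unset Strict Implicit. Unset Printing Implicit Defensive.
Import GRing.Theory Num.Theory.
Local Open Scope ring_scope.

(* Base field: an algebraically closed numeric field (the role of C; e.g. algC).
   Power series are formal: a series in t is a coefficient function nat -> R,
   a series in X,Y is a coefficient function nat -> nat -> R (g a b = coeff of X^a Y^b). *)
Section Defs.
Variable R : numClosedFieldType.

Definition ser1 := nat -> R.
Definition ser2 := nat -> nat -> R.

(* phi^*(g) = g(x(t), y(t)) for polynomials x, y with zero constant term:
   only monomials X^a Y^b with a, b <= n contribute to the coefficient of t^n. *)
Definition pullback (x y : {poly R}) (g : ser2) : ser1 :=
  fun n => \sum_(a < n.+1) \sum_(b < n.+1) g a b * (x ^+ a * y ^+ b)`_n.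

Definition pmul (p : {poly R}) (e : ser1) : ser1 :=
  fun n => \sum_(i < n.+1) p`_i * e (n - i)%N.

Definition inM1sq (e : ser1) : Prop := e 0%N = 0 /\ e 1%N = 0.
Definition inM2sq (g : ser2) : Prop := g 0%N 0%N = 0 /\ g 1%N 0%N = 0 /\ g 0%N 1%N = 0.
Definition inX2Y (g : ser2) : Prop := g 0%N 0%N = 0 /\ g 1%N 0%N = 0.

Definition jet (k : nat) (p : {poly R}) : {poly R} := \poly_(i < k.+1) p`_i.

Definition ord_eq (F : ser1) (m : nat) : Prop :=
  (forall n, (n < m)%N -> F n = 0) /\ F m != 0.

Definition tangent_mem (Gadm : ser2 -> Prop) (x y : {poly R}) (k : nat)
    (p q : {poly R}) : Prop :=
  exists (e : ser1) (g h : ser2), inM1sq e /\ Gadm g /\ inM2sq h /\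
    forall n, (n <= k)%N ->
      pmul x^`() e n + pullback x y g n = p`_n /\
      pmul y^`() e n + pullback x y h n = q`_n.

Definition value_semigroup (x y : {poly R}) (n : nat) : Prop :=
  exists h : ser2, (exists m, pullback x y h m != 0) /\ ord_eq (pullback x y h) n.

Definition min_gen (G : nat -> Prop) (n : nat) : Prop :=
  G n /\ (0 < n)%N /\
  ~ (exists a b, G a /\ G b /\ (0 < a)%N /\ (0 < b)%N /\ n = (a + b)%N).

Definition conductor (G : nat -> Prop) (c : nat) : Prop :=
  (forall n, (c <= n)%N -> G n) /\ (c = 0%N \/ ~ G c.-1).

Definition semigroup_data (G : nat -> Prop) (v0 v1 c : nat) : Prop :=
  min_gen G v0 /\ min_gen G v1 /\ (v0 < v1)%N /\
  (forall n, min_gen G n -> (v0 <= n)%N) /\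
  (forall n, min_gen G n -> n <> v0 -> (v1 <= n)%N) /\
  conductor G c.

Definition primitive_param (v0 : nat) (y : {poly R}) : Prop :=
  foldl gcdn v0 [seq i <- iota 0 (size y) | y`_i != 0] = 1%N.

Definition in_Sigma (G : nat -> Prop) (v0 v1 c : nat) (x y : {poly R}) : Prop :=
  [/\ x = 'X^v0, y`_v1 = 1, (forall i, (i < v1)%N -> y`_i = 0),
      (forall i, (c <= i)%N -> y`_i = 0) &
      [/\ primitive_param v0 y, ~~ (v0 %| v1)%N &
          forall n, G n <-> value_semigroup x y n]].

End Defs.

(* With [x = t^v0], put [A = y' e + h(x, y)] and [B = x' e + g(x, y)]; then
   [x' A - y' B = x' h(x, y) - y' g(x, y)] does not involve [e].  If [(0, b t^k)]
   is tangent, [B] vanishes up to [t^k] and [ord y' >= v1 - 1 > v0 - 1], so this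
   series has the order [k + v0 - 1] of [x' A].  Conversely, [g(x, y)] has order
   [> v0] for [g] in [<X^2, Y>], so [e] can be chosen with [B = 0]; the order
   condition then says that [A] starts with a nonzero multiple of [t^k], and
   rescaling [(e, g, h)] produces [(0, b t^k)]. *)
From HB Require Import structures.
From mathcomp Require Import all_boot all_order all_algebra.
From mathcomp Require Import zify.
Import GRing.Theory Num.Theory.
Local Open Scope ring_scope.

Section SeriesProducts.
Context {R : numClosedFieldType}.
Implicit Types (p q P : {poly R}) (e a c : ser1 R).

Lemma pmul_coef p P n : pmul p (fun j => P`_j) n = (p * P)`_n.
Proof. by rewrite coefM. Qed.

Lemma pmul_truncE p e N n :
  (n <= N)%N -> pmul p e n = (p * \poly_(i < N.+1) e i)`_n.
Proof.
move=> nN; rewrite coefM; apply: eq_bigr => i _.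
by rewrite coef_poly ifT //; have := ltn_ord i; lia.
Qed.

Arguments pmul_truncE {p e N n}.

Lemma pmulD p e1 e2 n :
  pmul p (fun m => e1 m + e2 m) n = pmul p e1 n + pmul p e2 n.
Proof. by rewrite /pmul -big_split; apply: eq_bigr => i _; rewrite mulrDr. Qed.

Lemma pmulZ p s e n : pmul p (fun m => s * e m) n = s * pmul p e n.
Proof. by rewrite /pmul mulr_sumr; apply: eq_bigr => i _; rewrite mulrCA. Qed.

Lemma pmul_comm p q e n : pmul p (pmul q e) n = pmul q (pmul p e) n.
Proof.
pose T := \poly_(i < n.+1) e i.
have truncT r : pmul r (pmul q e) n = (r * (q * T))`_n.
  rewrite -pmul_coef; apply: eq_bigr => i _.
  by rewrite (pmul_truncE (leq_subr i n)).
rewrite truncT mulrCA -pmul_coef; apply: eq_bigr => i _.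
by rewrite (pmul_truncE (leq_subr i n)).
Qed.

Lemma pmul_cross p q e a c n :
  pmul p (fun m => pmul q e m + a m) n - pmul q (fun m => pmul p e m + c m) n =
  pmul p a n - pmul q c n.
Proof. by rewrite !pmulD pmul_comm opprD addrACA subrr add0r. Qed.

Lemma pmul_eq0_low p e m l n :
  (forall i, (i < m)%N -> p`_i = 0) -> (forall j, (j < l)%N -> e j = 0) ->
  (n < m + l)%N -> pmul p e n = 0.
Proof.
move=> p0 e0 nml; apply: big1 => i _.
have [im|mi] := ltnP i m; first by rewrite p0 ?mul0r.
by rewrite e0 ?mulr0 //; have := ltn_ord i; lia.
Qed.

Lemma coef_deriv_eq0_low p v :
  (forall i, (i < v)%N -> p`_i = 0) -> forall i, (i < v.-1)%N -> p^`()`_i = 0.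
Proof. by move=> p0 i iv; rewrite coef_deriv p0 ?mul0rn //; lia. Qed.

Lemma pmul_derivXn v e n :
  pmul ('X^v)^`() e n = if (n < v.-1)%N then 0 else e (n - v.-1)%N *+ v.
Proof.
rewrite (pmul_truncE (leqnn n)) derivXn mulrnAl coefMn coefXnM.
case: ifP => [_|vn]; first by rewrite mul0rn.
by rewrite coef_poly ifT //; lia.
Qed.

Definition quot_derivXn v c : ser1 R := fun n => c (n + v.-1)%N / v%:R.

Lemma pmul_derivXn_quot v c n :
  (0 < v)%N -> (forall m, (m < v.-1)%N -> c m = 0) ->
  pmul ('X^v)^`() (quot_derivXn v c) n = c n.
Proof.
move=> v0 c0; rewrite pmul_derivXn; case: ifP => [/c0 -> //|vn].
rewrite /quot_derivXn subnK; last by rewrite leqNgt vn.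
by rewrite -[_ *+ v]mulr_natr divfK // pnatr_eq0 -lt0n.
Qed.

End SeriesProducts.

Section Order.
Context {R : numClosedFieldType}.
Implicit Types (F G A : ser1 R).

Lemma ord_eq_ext F G m :
  (forall n, (n <= m)%N -> F n = G n) -> ord_eq F m <-> ord_eq G m.
Proof.
move=> FG; rewrite /ord_eq FG //; split=> -[low ->]; split=> // n nm.
  by rewrite -FG ?low // ltnW.
by rewrite FG ?low // ltnW.
Qed.

Lemma ord_eq_pmul_derivXn v A k :
  (0 < v)%N -> ord_eq (pmul ('X^v)^`() A) (k + v).-1 <-> ord_eq A k.
Proof.
move=> v_gt0; have vN0 : v != 0%N by rewrite -lt0n.
have shiftE n : pmul ('X^v)^`() A (n + v.-1) = A n *+ v.
  by rewrite pmul_derivXn ifF ?addnK //; apply/negbTE; rewrite -leqNgt leq_addl.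
rewrite (_ : (k + v).-1 = k + v.-1)%N; last by lia.
rewrite /ord_eq shiftE mulrn_eq0 negb_or vN0 /=.
split=> -[low Ak]; split=> // n nk.
  apply/eqP; have := low (n + v.-1)%N; rewrite shiftE ltn_add2r => /(_ nk)/eqP.
  by rewrite mulrn_eq0 (negbTE vN0).
have [nv|vn] := ltnP n v.-1; first by rewrite pmul_derivXn nv.
by rewrite -(subnK vn) shiftE low ?mul0rn //; lia.
Qed.

End Order.

Section Pullback.
Context {R : numClosedFieldType}.
Implicit Types (p q x y : {poly R}) (g : ser2 R).

Lemma coefM_eq0_low p q m l :
  (forall i, (i < m)%N -> p`_i = 0) -> (forall i, (i < l)%N -> q`_i = 0) ->
  forall i, (i < m + l)%N -> (p * q)`_i = 0.
Proof.
by move=> p0 q0 i; rewrite -pmul_coef; apply: pmul_eq0_low.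
Qed.

Arguments coefM_eq0_low {p q m l}.

Lemma coefX_eq0_low p m a :
  (forall i, (i < m)%N -> p`_i = 0) -> forall i, (i < a * m)%N -> (p ^+ a)`_i = 0.
Proof.
move=> p0; elim: a => [|a IH] i; first by rewrite mul0n.
by rewrite exprS mulSn; apply: coefM_eq0_low.
Qed.

Arguments coefX_eq0_low {p m} a.

Lemma pullback_eq0_low x y g v0 v1 n :
  (forall i, (i < v0)%N -> x`_i = 0) -> (forall i, (i < v1)%N -> y`_i = 0) ->
  inX2Y g -> (n < v0.*2)%N -> (n < v1)%N -> pullback x y g n = 0.
Proof.
move=> x0 y0 [g00 g10] nv0 nv1; apply: big1 => a _; apply: big1 => c _.
have low := coefM_eq0_low (coefX_eq0_low a x0) (coefX_eq0_low c y0).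
have [a_le1|a_ge2] := leqP a 1; have [c0|c_ge1] := posnP c.
- by case: (a : nat) a_le1 => [|[|//]] _; rewrite c0 ?g00 ?g10 mul0r.
all: by rewrite low ?mulr0 //; nia.
Qed.

Lemma pullbackZ x y s g n :
  pullback x y (fun a c => s * g a c) n = s * pullback x y g n.
Proof.
rewrite /pullback mulr_sumr; apply: eq_bigr => a _; rewrite mulr_sumr.
by apply: eq_bigr => c _; rewrite mulrA.
Qed.

End Pullback.

Section Scaling.
Context {R : numClosedFieldType}.

Lemma inM1sqZ s (e : ser1 R) : inM1sq e -> inM1sq (fun n => s * e n).
Proof. by case=> e0 e1; rewrite /inM1sq e0 e1 mulr0. Qed.

Lemma inM2sqZ s (g : ser2 R) : inM2sq g -> inM2sq (fun a c => s * g a c).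
Proof. by case=> g00 [g10 g01]; rewrite /inM2sq g00 g10 g01 mulr0. Qed.

Lemma inX2YZ s (g : ser2 R) : inX2Y g -> inX2Y (fun a c => s * g a c).
Proof. by case=> g00 g10; rewrite /inX2Y g00 g10 mulr0. Qed.

End Scaling.

Section TangentSpace.
Variables (R : numClosedFieldType) (v0 v1 k : nat) (y : {poly R}).
Hypotheses (v0_gt0 : (0 < v0)%N) (v0_lt_v1 : (v0 < v1)%N)
  (y_low : forall i, (i < v1)%N -> y`_i = 0).

Lemma ord_eq_pmul_cross (e a c : ser1 R) :
  (forall j, (j <= k)%N -> pmul ('X^v0)^`() e j + c j = 0) ->
  ord_eq (fun n => pmul ('X^v0)^`() a n - pmul y^`() c n) (k + v0).-1 <->
  ord_eq (fun n => pmul y^`() e n + a n) k.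
Proof.
move=> B0; rewrite -(@ord_eq_pmul_derivXn _ v0 _ k v0_gt0).
apply: ord_eq_ext => n nk; rewrite -(pmul_cross _ _ e).
rewrite [pmul y^`() _ n](@pmul_eq0_low _ _ _ v1.-1 k.+1) ?subr0 //.
  exact: coef_deriv_eq0_low.
by lia.
Qed.

Variables (Gadm : ser2 R -> Prop) (b : R).
Hypotheses (Gadm_X2Y : forall g, Gadm g -> inX2Y g)
  (GadmZ : forall s g, Gadm g -> Gadm (fun a c => s * g a c)) (b_neq0 : b != 0).

Lemma tangent_mem_Xk_ord :
  tangent_mem Gadm 'X^v0 y k 0 (b *: 'X^k) <->
  exists g h : ser2 R, Gadm g /\ inM2sq h /\
    ord_eq (fun n => pmul ('X^v0)^`() (pullback 'X^v0 y h) n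
                     - pmul y^`() (pullback 'X^v0 y g) n) (k + v0).-1.
Proof.
set x : {poly R} := 'X^v0.
split=> [[e [g [h [_ [Gg [Mh jets]]]]]] | [g [h [Gg [Mh ordF]]]]].
  exists g, h; do 2!split=> //.
  rewrite (ord_eq_pmul_cross e) => [|j jk]; last first.
    by have [-> _] := jets j jk; rewrite coef0.
  split=> [n nk|].
    by have [_ ->] := jets n (ltnW nk); rewrite coefZ coefXn ltn_eqF ?mulr0.
  by have [_ ->] := jets k (leqnn k); rewrite coefZ coefXn eqxx mulr1.
have x_low i : (i < v0)%N -> x`_i = 0 by move=> iv; rewrite coefXn ltn_eqF.
have g_low n : (n <= v0)%N -> pullback x y g n = 0.
  move=> nv; have Gg_X2Y := Gadm_X2Y _ Gg.
  by apply: (@pullback_eq0_low _ x y g v0 v1 n x_low y_low Gg_X2Y); lia.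
(* [x' e = - g(x, y)] has a solution [e] in [M_1^2] because [g(x, y)] has order [> v0]. *)
pose e := quot_derivXn v0 (fun n => - pullback x y g n).
have B0 n : pmul x^`() e n + pullback x y g n = 0.
  rewrite pmul_derivXn_quot ?addNr // => m mv.
  by rewrite g_low ?oppr0 //; lia.
have Me : inM1sq e.
  by rewrite /inM1sq /e /quot_derivXn !g_low ?oppr0 ?mul0r //; lia.
have [A_low A_k] := iffLR (ord_eq_pmul_cross e _ _ (fun j _ => B0 j)) ordF.
pose s := b / (pmul y^`() e k + pullback x y h k).
exists (fun n => s * e n), (fun a c => s * g a c), (fun a c => s * h a c).
split; first exact: inM1sqZ.
split; first exact: GadmZ.
split; first exact: inM2sqZ.
move=> n nk; rewrite !pmulZ !pullbackZ -!mulrDr B0 mulr0 coef0 coefZ coefXn.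
split=> //; have [->|nk'] := eqVneq n k; first by rewrite mulr1 divfK.
by rewrite A_low ?mulr0 //; lia.
Qed.

End TangentSpace.

Theorem lemma3p1 (R : numClosedFieldType) (G : nat -> Prop) (v0 v1 c k : nat)
    (psix psiy : {poly R}) (b : R) :
  semigroup_data G v0 v1 c ->
  in_Sigma G v0 v1 c psix psiy ->
  (v1 < k)%N ->
  b != 0 ->
  let x := jet k psix in
  let y := jet k psiy in
  (tangent_mem (@inM2sq R) x y k 0 (b *: 'X^k) <->
     exists g h : ser2 R, inM2sq g /\ inM2sq h /\
       ord_eq (fun n => pmul x^`() (pullback x y h) n - pmul y^`() (pullback x y g) n)
              (k + v0).-1)
  /\
  (tangent_mem (@inX2Y R) x y k 0 (b *: 'X^k) <->
     exists g h : ser2 R, inX2Y g /\ inM2sq h /\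
       ord_eq (fun n => pmul x^`() (pullback x y h) n - pmul y^`() (pullback x y g) n)
              (k + v0).-1).
Proof.
move=> [[_ [v0_gt0 _]] [_ [v0_lt_v1 _]]] [psix_eq _ psiy_low _ _] v1_lt_k b_neq0 x y.
have -> : x = 'X^v0.
  apply/polyP => i; rewrite coef_poly psix_eq coefXn.
  by case: ltnP => // ki; rewrite gtn_eqF //; lia.
have y_low i : (i < v1)%N -> y`_i = 0.
  by move=> iv; rewrite coef_poly psiy_low // if_same.
split; apply: (@tangent_mem_Xk_ord R v0 v1 k y) => //.
- by move=> g [g00 [g10 _]].
- by move=> s g; apply: inM2sqZ.
- by move=> s g; apply: inX2YZ.
Qed.
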